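(* Let $S$ be a finite symmetric generating set of $\mathbb{Z}$ and $(X_n)_{n\ge0}$ the lazy random walk on $\mathrm{Cay}(\mathbb{Z},S)$. Then $$\mathbb{E}[D_{\mathbb{Z}}(X_n)]\xrightarrow[n\to\infty]{}2+\sum_{k\ge2}\frac{1}{[\mathbb{Z}:\Lambda_k]}<\infty.$$
   Context: For $x\ne0$, $D_{\mathbb{Z}}(x)=\min\{[\mathbb{Z}:N]: N \text{ a finite index subgroup of }\mathbb{Z},\ x\notin N\}$, and $D_{\mathbb{Z}}(0)=0$. $\Lambda_k$ ($k\ge2$) is the intersection of all subgroups of $\mathbb{Z}$ of index at most $k$. The lazy random walk starts at $0$ and at each step stays put with probability $1/2$ and otherwise adds a uniformly chosen element of $S$. *)

From Stdlib Require Import Reals Lra Lia ZArith List ClassicalEpsilon.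
From Coquelicot Require Import Coquelicot.
Open Scope R_scope.

(** Least natural number satisfying [P] (junk value 0 if there is none). *)
Definition least_nat (P : nat -> Prop) : nat :=
  epsilon (inhabits 0%nat) (fun n => P n /\ forall m, P m -> (n <= m)%nat).

(** Subgroups of finite index of Z are exactly the kZ, k >= 1, of index k.
    [in_kZ k x] means x belongs to the subgroup kZ. *)
Definition in_kZ (k : nat) (x : Z) : Prop := Z.divide (Z.of_nat k) x.

(** D_Z(x): least index of a finite-index subgroup not containing x;
    D_Z(0) = 0. *)
Definition DZ (x : Z) : nat :=
  if Z.eq_dec x 0 then 0%nat
  else least_nat (fun k => (1 <= k)%nat /\ ~ in_kZ k x).

(** Lambda_k : intersection of all subgroups of index at most k
    (i.e. of the jZ with 1 <= j <= k), as a predicate on Z. *)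
Definition Lambda (k : nat) (x : Z) : Prop :=
  forall j : nat, (1 <= j <= k)%nat -> in_kZ j x.

(** Index [Z : H] of a nonzero subgroup H of Z: the least positive
    element of H (= number of cosets, since H = nZ). *)
Definition indexZ (H : Z -> Prop) : nat :=
  least_nat (fun n => (1 <= n)%nat /\ H (Z.of_nat n)).

Definition symmetric (S : list Z) : Prop :=
  forall s, In s S -> In (- s)%Z S.

Definition generates_Z (S : list Z) : Prop :=
  forall z : Z, exists c : Z -> Z,
    z = fold_right Z.add 0%Z (map (fun s => (c s * s)%Z) S).

Definition lazy_step (S : list Z) (f : Z -> R) (x : Z) : R :=
  / 2 * f x + / 2 * (/ INR (length S) *
     fold_right Rplus 0 (map (fun s => f (x + s)%Z) S)).

(** [walk_expect S n f x0] = E[f(X_n)] for the lazy walk started at x0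
    (Markov semigroup: E_{x0}[f(X_n)] = (P^n f)(x0)). *)
Fixpoint walk_expect (S : list Z) (n : nat) (f : Z -> R) (x0 : Z) : R :=
  match n with
  | O => f x0
  | Datatypes.S m => walk_expect S m (lazy_step S f) x0
  end.

(* For [x <> 0], [D_Z(x) = 2 + #{k >= 2 | x in Lambda_k}], and [Lambda_k = L_k Z] with
   [L_k = [Z : Lambda_k]], so that
     E[D_Z(X_n)] = 2 P(X_n <> 0) + sum_(k >= 2) (P(X_n in L_k Z) - P(X_n = 0)).
   Averaging the characters of [Z/mZ] gives
     P(X_n in mZ) = 1/m sum_(j < m) phi(2 pi j / m)^n,
   where [phi] is the Fourier symbol of the lazy step: [0 <= phi <= 1], and
   [1 - phi(2u) >= c sin^2 u] because [S] generates [Z]. Hence [P(X_n in mZ) -> 1/m] (so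
   [P(X_n = 0) -> 0]), and [P(X_n in mZ) <= K / sqrt m] uniformly as long as [mZ \ {0}] is
   within reach of [X_n] at all. Since [o (o - 1) (o - 2)] divides [L_k] for odd [o <= k],
   [L_k] grows like [k^3]; thus [K / sqrt L_k] is a summable dominating sequence and
   Tannery's theorem yields the limit. *)

From Stdlib Require Import Reals Lra Lia ZArith List Wf_nat Classical ClassicalEpsilon Permutation.
From Coquelicot Require Import Coquelicot.
Open Scope R_scope.

Fixpoint sum_lt (n : nat) (f : nat -> R) : R :=
  match n with O => 0 | Datatypes.S n' => sum_lt n' f + f n' end.

Lemma sum_lt_ext n f g : (forall k, (k < n)%nat -> f k = g k) -> sum_lt n f = sum_lt n g.
Proof.
  induction n as [|n IH]; intros H; simpl; auto.
  rewrite IH, H; auto with arith.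
Qed.

Lemma sum_lt_le n f g : (forall k, (k < n)%nat -> f k <= g k) -> sum_lt n f <= sum_lt n g.
Proof.
  induction n as [|n IH]; intros H; simpl; [lra|].
  apply Rplus_le_compat; [apply IH; auto with arith | apply H; lia].
Qed.

Lemma sum_lt_const n c : sum_lt n (fun _ => c) = INR n * c.
Proof. induction n; simpl sum_lt; [simpl; ring | rewrite IHn, S_INR; ring]. Qed.

Lemma sum_lt_nonneg n f : (forall k, (k < n)%nat -> 0 <= f k) -> 0 <= sum_lt n f.
Proof.
  intros H. replace 0 with (sum_lt n (fun _ => 0)) by (rewrite sum_lt_const; ring).
  now apply sum_lt_le.
Qed.

Lemma sum_lt_plus n f g : sum_lt n (fun k => f k + g k) = sum_lt n f + sum_lt n g.
Proof. induction n; simpl; [ring | rewrite IHn; ring]. Qed.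

Lemma sum_lt_scal n c f : sum_lt n (fun k => c * f k) = c * sum_lt n f.
Proof. induction n; simpl; [ring | rewrite IHn; ring]. Qed.


Lemma sum_lt_succ_l n f :
  sum_lt (Datatypes.S n) f = f 0%nat + sum_lt n (fun k => f (Datatypes.S k)).
Proof. induction n; simpl in *; [ring | rewrite IHn; ring]. Qed.

Lemma sum_lt_rev n f : sum_lt n (fun k => f (n - 1 - k)%nat) = sum_lt n f.
Proof.
  induction n as [|n IH]; auto.
  rewrite sum_lt_succ_l. simpl sum_lt at 2.
  rewrite (sum_lt_ext n _ (fun k => f (n - 1 - k)%nat)) by (intros; f_equal; lia).
  rewrite IH. replace (Datatypes.S n - 1 - 0)%nat with n by lia. ring.
Qed.

Lemma sum_lt_add n d f : sum_lt (n + d) f = sum_lt n f + sum_lt d (fun k => f (n + k)%nat).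
Proof.
  induction d; simpl; [rewrite Nat.add_0_r; ring|].
  rewrite Nat.add_succ_r. simpl. rewrite IHd. ring.
Qed.

Lemma sum_lt_vanishing n K f : (n <= K)%nat -> (forall k, (n <= k)%nat -> f k = 0) ->
  sum_lt K f = sum_lt n f.
Proof.
  intros HnK H. replace K with (n + (K - n))%nat by lia.
  rewrite sum_lt_add, (sum_lt_ext (K - n) _ (fun _ => 0)) by (intros; apply H; lia).
  rewrite sum_lt_const. ring.
Qed.

Lemma sum_lt_sum_n N f : sum_lt (Datatypes.S N) f = sum_n f N.
Proof.
  rewrite sum_n_Reals. induction N; simpl in *; [ring|].
  rewrite <- IHN. reflexivity.
Qed.

Lemma is_lim_seq_sum_lt K (F : nat -> nat -> R) (l : nat -> R) :
  (forall k, (k < K)%nat -> is_lim_seq (F k) (l k)) ->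
  is_lim_seq (fun n => sum_lt K (fun k => F k n)) (sum_lt K l).
Proof.
  induction K as [|K IH]; intros H; simpl.
  - apply is_lim_seq_const.
  - apply is_lim_seq_plus'; [apply IH; auto with arith | apply H; lia].
Qed.

Lemma Rinv_nonneg x : 0 <= x -> 0 <= / x.
Proof.
  intros H. destruct (Req_dec x 0) as [->|Hx]; [rewrite Rinv_0; lra|].
  left. apply Rinv_0_lt_compat. lra.
Qed.

Definition indic (P : Prop) : R := if excluded_middle_informative P then 1 else 0.

Lemma indic_true (P : Prop) : P -> indic P = 1.
Proof. intros H. unfold indic. destruct (excluded_middle_informative P); tauto. Qed.

Lemma indic_false (P : Prop) : ~ P -> indic P = 0.
Proof. intros H. unfold indic. destruct (excluded_middle_informative P); tauto. Qed.

Lemma indic_bounds (P : Prop) : 0 <= indic P <= 1.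
Proof. unfold indic. destruct (excluded_middle_informative P); lra. Qed.

Lemma indic_iff (P Q : Prop) : (P <-> Q) -> indic P = indic Q.
Proof. intros H. destruct (classic P); [rewrite !indic_true | rewrite !indic_false]; tauto. Qed.

Lemma sum_lt_indic_lt n r : sum_lt n (fun k => indic (k < r)%nat) = INR (Nat.min r n).
Proof.
  induction n as [|n IH]; simpl sum_lt; [rewrite Nat.min_0_r; reflexivity|].
  rewrite IH. destruct (le_lt_dec r n).
  - rewrite indic_false, !Nat.min_l by lia. ring.
  - rewrite indic_true, !Nat.min_r, S_INR by lia. reflexivity.
Qed.

Definition sum_list (l : list Z) (f : Z -> R) : R := fold_right Rplus 0 (map f l).

Lemma sum_list_lin l a b f g :
  sum_list l (fun s => a * f s + b * g s) = a * sum_list l f + b * sum_list l g.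
Proof. induction l; unfold sum_list in *; simpl; [ring | rewrite IHl; ring]. Qed.

Lemma sum_list_const l c : sum_list l (fun _ => c) = INR (length l) * c.
Proof.
  unfold sum_list. induction l as [|a l IH]; [simpl; ring|].
  cbn [map fold_right length]. rewrite IH, S_INR. ring.
Qed.

Lemma sum_list_ext l f g : (forall s, In s l -> f s = g s) -> sum_list l f = sum_list l g.
Proof. intros H. unfold sum_list. f_equal. now apply map_ext_in. Qed.

Lemma sum_list_le l f g : (forall s, In s l -> f s <= g s) -> sum_list l f <= sum_list l g.
Proof.
  induction l; unfold sum_list in *; simpl; intros H; [lra|].
  apply Rplus_le_compat; auto.
Qed.

Lemma sum_list_nonneg l f : (forall s, In s l -> 0 <= f s) -> 0 <= sum_list l f.
Proof.
  intros H. replace 0 with (sum_list l (fun _ => 0)) by (rewrite sum_list_const; ring).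
  now apply sum_list_le.
Qed.

Lemma sum_list_term_le l f s : (forall s, In s l -> 0 <= f s) -> In s l -> f s <= sum_list l f.
Proof.
  induction l as [|a l IH]; simpl; intros H Hs; [tauto|]. unfold sum_list in *; simpl.
  pose proof (sum_list_nonneg l f (fun s h => H s (or_intror h))).
  pose proof (H a (or_introl eq_refl)).
  destruct Hs as [<-|Hs]; [|pose proof (IH (fun s h => H s (or_intror h)) Hs)];
    unfold sum_list in *; lra.
Qed.

Lemma sum_list_symmetric l f : NoDup l -> symmetric l ->
  sum_list l (fun s => f (- s)%Z) = sum_list l f.
Proof.
  intros Hnd Hsym.
  assert (Hperm : Permutation (map Z.opp l) l).
  { apply Permutation_map_same_l.
    - apply NoDup_map_NoDup_ForallPairs; auto. intros x y _ _ h. lia.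
    - intros y Hy. apply in_map_iff in Hy. destruct Hy as [x [<- Hx]]. auto. }
  unfold sum_list. rewrite <- map_map.
  apply (Permutation_map f) in Hperm. induction Hperm; simpl; lra.
Qed.

(** * The function D_Z and the subgroups Lambda_k *)

Lemma least_nat_spec (P : nat -> Prop) : (exists n, P n) ->
  P (least_nat P) /\ forall m, P m -> (least_nat P <= m)%nat.
Proof.
  intros HP. unfold least_nat. apply epsilon_spec.
  destruct (dec_inh_nat_subset_has_unique_least_element P (fun n => classic (P n)) HP)
    as [n [Hn _]].
  now exists n.
Qed.

Lemma not_in_kZ_abs_succ x : x <> 0%Z -> ~ in_kZ (Z.to_nat (Z.abs x) + 1) x.
Proof.
  intros Hx Hd. unfold in_kZ in Hd. rewrite Nat2Z.inj_add, Z2Nat.id in Hd by lia.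
  apply Z.divide_abs_r, Z.divide_pos_le in Hd; lia.
Qed.

Lemma DZ_spec x : x <> 0%Z ->
  (1 <= DZ x)%nat /\ ~ in_kZ (DZ x) x /\
  forall k, (1 <= k)%nat -> ~ in_kZ k x -> (DZ x <= k)%nat.
Proof.
  intros Hx. unfold DZ. destruct (Z.eq_dec x 0); [contradiction|].
  destruct (least_nat_spec (fun k => (1 <= k)%nat /\ ~ in_kZ k x)) as [[H1 H2] H3].
  - exists (Z.to_nat (Z.abs x) + 1)%nat. split; [lia | now apply not_in_kZ_abs_succ].
  - repeat split; auto.
Qed.

Lemma DZ_0 : DZ 0 = 0%nat.
Proof. reflexivity. Qed.

Lemma DZ_ge_2 x : x <> 0%Z -> (2 <= DZ x)%nat.
Proof.
  intros Hx. destruct (DZ_spec x Hx) as [H1 [H2 _]].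
  destruct (Nat.eq_dec (DZ x) 1) as [E|E]; [|lia].
  exfalso. apply H2. rewrite E. apply Z.divide_1_l.
Qed.

Lemma DZ_le_abs_succ x : x <> 0%Z -> (DZ x <= Z.to_nat (Z.abs x) + 1)%nat.
Proof.
  intros Hx. apply (DZ_spec x Hx); [lia|]. now apply not_in_kZ_abs_succ.
Qed.

Lemma Lambda_iff_lt_DZ j x : x <> 0%Z -> Lambda j x <-> (j < DZ x)%nat.
Proof.
  intros Hx. destruct (DZ_spec x Hx) as [H1 [H2 H3]]. split.
  - intros HL. destruct (le_lt_dec (DZ x) j); auto.
    exfalso. apply H2, HL. lia.
  - intros Hlt i Hi. apply NNPP. intros Hn. specialize (H3 i (proj1 Hi) Hn). lia.
Qed.

(* [D_Z(x) - 2] counts the [k >= 2] with [x] in [Lambda_k]; a window of [K >= |x|]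
   values of [k] sees all of them since [D_Z(x) <= |x| + 1]. *)
Lemma DZ_as_sum x K : (Z.to_nat (Z.abs x) <= K)%nat ->
  INR (DZ x) = 2 * indic (x <> 0%Z) + sum_lt K (fun k => indic (x <> 0%Z /\ Lambda (k + 2) x)).
Proof.
  intros HK. destruct (Z.eq_dec x 0) as [->|Hx].
  - rewrite DZ_0, indic_false by tauto.
    rewrite (sum_lt_ext K _ (fun _ => 0)), sum_lt_const; [simpl; ring|].
    intros k _. apply indic_false. tauto.
  - pose proof (DZ_ge_2 x Hx). pose proof (DZ_le_abs_succ x Hx).
    rewrite indic_true by exact Hx.
    rewrite (sum_lt_ext K _ (fun k => indic (k < DZ x - 2)%nat)).
    + rewrite sum_lt_indic_lt, Nat.min_l, minus_INR by lia. simpl. ring.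
    + intros k _. apply indic_iff. rewrite Lambda_iff_lt_DZ by exact Hx. lia.
Qed.

Definition Lambda_index (j : nat) : nat := indexZ (Lambda j).

Lemma Lambda_has_positive_element j : exists n, (1 <= n)%nat /\ Lambda j (Z.of_nat n).
Proof.
  induction j as [|j [n [Hn HL]]].
  - exists 1%nat. split; [lia | intros i Hi; lia].
  - exists (Datatypes.S j * n)%nat. split; [nia|].
    intros i Hi. unfold in_kZ. rewrite Nat2Z.inj_mul.
    destruct (Nat.eq_dec i (Datatypes.S j)) as [->|Hij].
    + apply Z.divide_factor_l.
    + apply Z.divide_mul_r, HL. lia.
Qed.

Lemma Lambda_index_spec j :
  (1 <= Lambda_index j)%nat /\ Lambda j (Z.of_nat (Lambda_index j)) /\
  forall n, (1 <= n)%nat -> Lambda j (Z.of_nat n) -> (Lambda_index j <= n)%nat.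
Proof.
  unfold Lambda_index, indexZ.
  destruct (least_nat_spec (fun n => (1 <= n)%nat /\ Lambda j (Z.of_nat n))) as [[H1 H2] H3].
  - apply Lambda_has_positive_element.
  - repeat split; auto.
Qed.

Lemma Lambda_index_ge_1 j : 1 <= INR (Lambda_index j).
Proof. apply (le_INR 1), Lambda_index_spec. Qed.

(* [Lambda_j] is a subgroup, so it is generated by its least positive element. *)
Lemma Lambda_iff_in_kZ j x : Lambda j x <-> in_kZ (Lambda_index j) x.
Proof.
  destruct (Lambda_index_spec j) as [H1 [H2 H3]]. set (l := Z.of_nat (Lambda_index j)). split.
  - intros HL.
    assert (Hr : Lambda j (x mod l)).
    { intros i Hi. rewrite Z.mod_eq by lia. apply Z.divide_sub_r; [now apply HL|].
      apply Z.divide_mul_l. now apply H2. }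
    destruct (Z.eq_dec (x mod l) 0) as [E|E].
    + apply Z.mod_divide; [lia | exact E].
    + assert (Hb : (0 <= x mod l < l)%Z) by (apply Z.mod_pos_bound; lia).
      specialize (H3 (Z.to_nat (x mod l))). rewrite Z2Nat.id in H3 by lia.
      assert (Lambda_index j <= Z.to_nat (x mod l))%nat by (apply H3; [lia | exact Hr]).
      lia.
  - intros Hd i Hi. eapply Z.divide_trans; [now apply H2 | exact Hd].
Qed.

Lemma divide_mul_coprime a b n : (a | n)%Z -> (b | n)%Z -> Z.gcd a b = 1%Z -> (a * b | n)%Z.
Proof.
  intros [t ->] Hb Hg.
  assert (Hbt : (b | t)%Z) by (apply Z.gauss with a; [now rewrite Z.mul_comm | now rewrite Z.gcd_comm]).
  destruct Hbt as [u ->]. exists u. ring.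
Qed.

(* For odd [o], the three numbers [o], [o - 1], [o - 2] are pairwise coprime. *)
Lemma Lambda_divisible_by_three_consecutive j x t :
  (3 <= 2 * t + 1 <= j)%nat -> Lambda j x ->
  (Z.of_nat (2 * t + 1) * Z.of_nat (2 * t) * Z.of_nat (2 * t - 1) | x)%Z.
Proof.
  intros Ht HL. set (o := (2 * t + 1)%nat).
  replace (Z.of_nat (2 * t)) with (Z.of_nat o - 1)%Z by lia.
  replace (Z.of_nat (2 * t - 1)) with (Z.of_nat o - 2)%Z by lia.
  apply divide_mul_coprime; [apply divide_mul_coprime| |].
  - apply HL. lia.
  - replace (Z.of_nat o - 1)%Z with (Z.of_nat (o - 1)) by lia. apply HL. lia.
  - apply Z.bezout_1_gcd. exists 1%Z, (-1)%Z. ring.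
  - replace (Z.of_nat o - 2)%Z with (Z.of_nat (o - 2)) by lia. apply HL. lia.
  - apply Z.bezout_1_gcd. exists (Z.of_nat t), (- (2 * Z.of_nat t * Z.of_nat t + 2 * Z.of_nat t + 1))%Z.
    unfold o. rewrite Nat2Z.inj_add, Nat2Z.inj_mul. ring.
Qed.

Lemma Lambda_index_cube_bound k : INR (k + 1) ^ 3 <= 8 * INR (Lambda_index (k + 2)).
Proof.
  destruct (Lambda_index_spec (k + 2)) as [H1 [H2 _]].
  replace 8 with (INR 8) by (simpl; lra).
  rewrite <- pow_INR, <- mult_INR. apply le_INR.
  destruct (le_lt_dec k 1) as [Hk|Hk].
  { assert ((k + 1) ^ 3 <= 8)%nat by (destruct k as [|[|]]; simpl; lia). lia. }
  (* the largest odd [o <= k + 2] satisfies [o >= k + 1] *)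
  assert (Ht : exists t, (k <= 2 * t <= k + 1)%nat).
  { destruct (Nat.Even_or_Odd k) as [[t Ht]|[t Ht]]; [exists t | exists (t + 1)%nat]; lia. }
  destruct Ht as [t Ht].
  pose proof (Lambda_divisible_by_three_consecutive (k + 2) _ t ltac:(lia) H2) as Hd.
  apply Z.divide_pos_le in Hd; [|lia].
  apply Nat2Z.inj_le. rewrite Nat2Z.inj_mul, Nat2Z.inj_pow.
  rewrite !Nat2Z.inj_add, !Nat2Z.inj_sub, !Nat2Z.inj_mul in * by lia.
  set (a := Z.of_nat k) in *. set (T := Z.of_nat t) in *. simpl Z.of_nat in *.
  assert (Hmono : ((a + 1) * a * (a - 1) <= (2 * T + 1) * (2 * T) * (2 * T - 1))%Z).
  { apply Z.mul_le_mono_nonneg; [nia | apply Z.mul_le_mono_nonneg; lia | lia | lia]. }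
  assert (Hcube : ((a + 1) ^ 3 <= 8 * ((a + 1) * a * (a - 1)))%Z).
  { assert (0 <= 7 * a * a - 10 * a - 1)%Z by nia. nia. }
  lia.
Qed.

(** * The lazy walk as an averaging operator *)

Definition jump_bound (S : list Z) : Z := fold_right (fun s acc => Z.abs s + acc)%Z 0%Z S.

Lemma jump_bound_nonneg S : (0 <= jump_bound S)%Z.
Proof. induction S; simpl; lia. Qed.

Lemma abs_le_jump_bound S s : In s S -> (Z.abs s <= jump_bound S)%Z.
Proof.
  induction S as [|a S IH]; simpl; intros H; [tauto|].
  pose proof (jump_bound_nonneg S). destruct H as [<-|H]; [lia|]. specialize (IH H). lia.
Qed.

Lemma generates_Z_nonempty S : generates_Z S -> S <> nil.
Proof. intros Hgen ->. destruct (Hgen 1%Z) as [c Hc]. discriminate. Qed.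

Definition walk_prob (S : list Z) (n : nat) (A : Z -> Prop) : R :=
  walk_expect S n (fun x => indic (A x)) 0%Z.

Section WalkOperator.

Variable S : list Z.

Lemma lazy_step_eq f x :
  lazy_step S f x = / 2 * f x + / 2 * (/ INR (length S) * sum_list S (fun s => f (x + s)%Z)).
Proof. reflexivity. Qed.

(* The walk moves by at most [jump_bound S] per step. *)
Lemma walk_local n f g x0 :
  (forall x, (Z.abs (x - x0) <= Z.of_nat n * jump_bound S)%Z -> f x = g x) ->
  walk_expect S n f x0 = walk_expect S n g x0.
Proof.
  revert f g. induction n as [|n IH]; intros f g H; simpl.
  - apply H. lia.
  - apply IH. intros x Hx. pose proof (jump_bound_nonneg S).
    rewrite !lazy_step_eq, H by lia. do 3 f_equal. apply sum_list_ext.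
    intros s Hs. apply H. pose proof (abs_le_jump_bound S s Hs). lia.
Qed.

Lemma walk_ext n f g x0 : (forall x, f x = g x) -> walk_expect S n f x0 = walk_expect S n g x0.
Proof. intros H. apply walk_local. auto. Qed.

Lemma walk_lin n a b f g x0 :
  walk_expect S n (fun x => a * f x + b * g x) x0 =
  a * walk_expect S n f x0 + b * walk_expect S n g x0.
Proof.
  revert f g. induction n as [|n IH]; intros f g; simpl; auto.
  rewrite <- IH. apply walk_ext. intros x. rewrite !lazy_step_eq.
  rewrite (sum_list_lin S a b (fun s => f (x + s)%Z) (fun s => g (x + s)%Z)). ring.
Qed.

Lemma walk_scal n a f x0 : walk_expect S n (fun x => a * f x) x0 = a * walk_expect S n f x0.
Proof.
  rewrite (walk_ext n _ (fun x => a * f x + 0 * f x)) by (intros; ring).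
  rewrite walk_lin. ring.
Qed.

Lemma walk_plus n f g x0 :
  walk_expect S n (fun x => f x + g x) x0 = walk_expect S n f x0 + walk_expect S n g x0.
Proof.
  rewrite (walk_ext n _ (fun x => 1 * f x + 1 * g x)) by (intros; ring).
  rewrite walk_lin. ring.
Qed.

Lemma walk_minus n f g x0 :
  walk_expect S n (fun x => f x - g x) x0 = walk_expect S n f x0 - walk_expect S n g x0.
Proof.
  rewrite (walk_ext n _ (fun x => 1 * f x + (-1) * g x)) by (intros; ring).
  rewrite walk_lin. ring.
Qed.

Lemma walk_mono n f g x0 : (forall x, f x <= g x) -> walk_expect S n f x0 <= walk_expect S n g x0.
Proof.
  revert f g. induction n as [|n IH]; intros f g H; simpl; auto.
  apply IH. intros x. rewrite !lazy_step_eq.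
  pose proof (Rinv_nonneg (INR (length S)) (pos_INR _)).
  pose proof (sum_list_le S (fun s => f (x + s)%Z) (fun s => g (x + s)%Z) (fun s _ => H (x + s)%Z)).
  pose proof (H x). nra.
Qed.

Hypothesis S_nonempty : S <> nil.

Lemma length_pos : 0 < INR (length S).
Proof. destruct S; [congruence|]. apply lt_0_INR. simpl. lia. Qed.

Lemma walk_const n c x0 : walk_expect S n (fun _ => c) x0 = c.
Proof.
  revert x0. induction n as [|n IH]; intros x0; simpl; auto.
  rewrite (walk_ext n _ (fun _ => c)); auto.
  intros x. rewrite lazy_step_eq, sum_list_const. pose proof length_pos. field. lra.
Qed.

Lemma walk_nonneg n f x0 : (forall x, 0 <= f x) -> 0 <= walk_expect S n f x0.
Proof. intros H. rewrite <- (walk_const n 0 x0). now apply walk_mono. Qed.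

Lemma walk_sum_lt n K F x0 :
  walk_expect S n (fun x => sum_lt K (fun k => F k x)) x0 =
  sum_lt K (fun k => walk_expect S n (F k) x0).
Proof.
  induction K as [|K IH]; simpl.
  - apply walk_const.
  - now rewrite walk_plus, IH.
Qed.

Lemma walk_prob_nonneg n A : 0 <= walk_prob S n A.
Proof. apply walk_nonneg. intros. apply indic_bounds. Qed.

Lemma walk_prob_iff n (A B : Z -> Prop) :
  (forall x, A x <-> B x) -> walk_prob S n A = walk_prob S n B.
Proof. intros H. apply walk_ext. intros x. now apply indic_iff. Qed.

Lemma walk_prob_mono n (A B : Z -> Prop) :
  (forall x, A x -> B x) -> walk_prob S n A <= walk_prob S n B.
Proof.
  intros H. apply walk_mono. intros x. destruct (classic (A x)) as [Hx|Hx].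
  - rewrite !indic_true by auto. lra.
  - rewrite indic_false by auto. apply indic_bounds.
Qed.

Lemma walk_prob_diff n (A B : Z -> Prop) : (forall x, B x -> A x) ->
  walk_prob S n (fun x => A x /\ ~ B x) = walk_prob S n A - walk_prob S n B.
Proof.
  intros H. unfold walk_prob. rewrite <- walk_minus. apply walk_ext. intros x.
  destruct (classic (B x)) as [Hx|Hx].
  - pose proof (H x Hx). rewrite indic_false, !indic_true by tauto. ring.
  - rewrite (indic_false (B x)), Rminus_0_r by auto. apply indic_iff. tauto.
Qed.

Lemma walk_prob_out_of_range n (A : Z -> Prop) :
  (forall x, A x -> (Z.of_nat n * jump_bound S < Z.abs x)%Z) -> walk_prob S n A = 0.
Proof.
  intros H. unfold walk_prob. rewrite (walk_local n _ (fun _ => 0)).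
  - apply walk_const.
  - intros x Hx. apply indic_false. intros HA. specialize (H x HA). lia.
Qed.

End WalkOperator.

Lemma cos_2PI_mult_IZR z : cos (2 * PI * IZR z) = 1.
Proof.
  replace (2 * PI * IZR z) with (2 * (IZR z * PI)) by ring.
  rewrite cos_2a_sin, sin_eq_0_1 by now exists z. ring.
Qed.

Lemma sin_plus_2PI_mult_IZR y z : sin (y + 2 * PI * IZR z) = sin y.
Proof.
  rewrite sin_plus, cos_2PI_mult_IZR.
  replace (2 * PI * IZR z) with (2 * (IZR z * PI)) by ring.
  rewrite sin_2a, (sin_eq_0_1 (IZR z * PI)) by now exists z. ring.
Qed.

Lemma sum_cos_telescoping th n :
  2 * sin (th / 2) * sum_lt n (fun j => cos (INR j * th)) = sin ((INR n - / 2) * th) + sin (th / 2).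
Proof.
  induction n as [|n IH]; simpl sum_lt.
  - rewrite INR_0. replace ((0 - / 2) * th) with (- (th / 2)) by field. rewrite sin_neg. ring.
  - rewrite Rmult_plus_distr_l, IH, S_INR.
    replace ((INR n + 1 - / 2) * th) with (INR n * th + th / 2) by field.
    replace ((INR n - / 2) * th) with (INR n * th - th / 2) by field.
    rewrite sin_plus, sin_minus. ring.
Qed.

Definition root_angle (j m : nat) : R := 2 * PI * INR j / INR m.

Lemma sum_cos_root_angles m x : (1 <= m)%nat ->
  sum_lt m (fun j => cos (root_angle j m * IZR x)) = INR m * indic (in_kZ m x).
Proof.
  intros Hm. assert (Hm0 : INR m <> 0) by (apply not_0_INR; lia).
  set (th := 2 * PI * IZR x / INR m).
  rewrite (sum_lt_ext m _ (fun j => cos (INR j * th)))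
    by (intros; unfold root_angle, th; f_equal; field; auto).
  destruct (classic (in_kZ m x)) as [[t ->]|Hd].
  - rewrite indic_true by now exists t.
    rewrite (sum_lt_ext m _ (fun _ => 1)), sum_lt_const; [ring|].
    intros j _. unfold th. rewrite mult_IZR, <- INR_IZR_INZ, <- (cos_2PI_mult_IZR (Z.of_nat j * t)).
    f_equal. rewrite mult_IZR, <- INR_IZR_INZ. field. auto.
  - rewrite indic_false by exact Hd.
    assert (Hs : sin (th / 2) <> 0).
    { intros H. apply sin_eq_0_0 in H. destruct H as [k Hk]. apply Hd.
      exists k. apply eq_IZR. rewrite mult_IZR, <- INR_IZR_INZ.
      unfold th in Hk. pose proof PI_RGT_0.
      assert (E : IZR x / INR m * PI = IZR k * PI) by (rewrite <- Hk; unfold th; field; auto).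
      apply Rmult_eq_reg_r in E; [|lra].
      rewrite <- E. field. auto. }
    pose proof (sum_cos_telescoping th m) as T.
    replace ((INR m - / 2) * th) with (- (th / 2) + 2 * PI * IZR x) in T by (unfold th; field; auto).
    rewrite sin_plus_2PI_mult_IZR, sin_neg, Rplus_opp_l in T.
    apply Rmult_integral in T. destruct T as [T|T]; [exfalso; apply Hs; lra | rewrite T; ring].
Qed.

Lemma Rabs_sin_plus_le a b : Rabs (sin (a + b)) <= Rabs (sin a) + Rabs (sin b).
Proof.
  rewrite sin_plus. eapply Rle_trans; [apply Rabs_triang|]. rewrite !Rabs_mult.
  assert (Rabs (cos a) <= 1) by (apply Rabs_le, COS_bound).
  assert (Rabs (cos b) <= 1) by (apply Rabs_le, COS_bound).
  pose proof (Rabs_pos (sin a)). pose proof (Rabs_pos (sin b)). nra.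
Qed.

Lemma Rabs_sin_INR_mult_le k y : Rabs (sin (INR k * y)) <= INR k * Rabs (sin y).
Proof.
  induction k as [|k IH].
  - simpl. rewrite Rmult_0_l, sin_0, Rabs_R0. lra.
  - rewrite S_INR. replace ((INR k + 1) * y) with (INR k * y + y) by ring.
    eapply Rle_trans; [apply Rabs_sin_plus_le | lra].
Qed.

Lemma Rabs_sin_IZR_mult_le k y : Rabs (sin (IZR k * y)) <= Rabs (IZR k) * Rabs (sin y).
Proof.
  destruct (Z_le_gt_dec 0 k).
  - rewrite <- (Z2Nat.id k), <- INR_IZR_INZ, (Rabs_pos_eq (INR _)) by (lia || apply pos_INR).
    apply Rabs_sin_INR_mult_le.
  - replace k with (- Z.of_nat (Z.to_nat (- k)))%Z by lia.
    rewrite opp_IZR, <- INR_IZR_INZ, Rabs_Ropp, (Rabs_pos_eq (INR _)) by apply pos_INR.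
    rewrite Ropp_mult_distr_l_reverse, sin_neg, Rabs_Ropp. apply Rabs_sin_INR_mult_le.
Qed.

(* Jordan-type bound: [sin y >= y - y^3/6 >= y/PI] on [0, PI/2]. *)
Lemma sin_root_angle_lower m j : (1 <= j)%nat -> (j < m)%nat ->
  INR (Nat.min j (m - j)) / INR m <= sin (PI * INR j / INR m).
Proof.
  intros Hj Hjm. set (i := Nat.min j (m - j)).
  assert (Hm : 0 < INR m) by (apply lt_0_INR; lia).
  assert (Hi1 : 1 <= INR i) by (apply (le_INR 1); unfold i; lia).
  assert (Hi2 : 2 * INR i <= INR m).
  { replace 2 with (INR 2) by (simpl; lra). rewrite <- mult_INR. apply le_INR. unfold i. lia. }
  pose proof PI2_3_2. pose proof PI_4.
  set (y := PI * INR i / INR m).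
  assert (Hy0 : 0 < y) by (unfold y; apply Rdiv_lt_0_compat; nra).
  assert (Hy1 : y <= PI / 2).
  { unfold y. apply Rmult_le_reg_r with (INR m); auto. field_simplify; nra. }
  replace (sin (PI * INR j / INR m)) with (sin y).
  2:{ unfold y, i. destruct (Nat.min_spec j (m - j)) as [[_ ->]|[_ ->]]; auto.
      rewrite minus_INR, <- sin_PI_x by lia. f_equal. field. lra. }
  pose proof (sin_bound y 0 (Rlt_le _ _ Hy0) ltac:(lra)) as [Hb _].
  unfold sin_approx, sin_term in Hb. simpl in Hb.
  replace (INR i / INR m) with (y / PI) by (unfold y; field; lra).
  assert (y ^ 2 <= 4) by nra.
  assert (y / PI <= y / 3) by (apply Rmult_le_compat_l; [lra | apply Rinv_le_contravar; lra]).
  nra.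
Qed.

Lemma pow_le_one a n : 0 <= a <= 1 -> a ^ n <= 1.
Proof. intros Ha. induction n; simpl; [lra|]. pose proof (pow_le a n (proj1 Ha)). nra. Qed.

Lemma pow_one_minus_mul_le x n : 0 <= x <= 1 -> (1 - x) ^ n * (1 + INR n * x) <= 1.
Proof.
  intros Hx.
  assert (Hbern : 1 + INR n * x <= (1 + x) ^ n).
  { induction n as [|n IH]; [simpl; lra|]. rewrite S_INR. simpl.
    pose proof (Rmult_le_compat_l (1 + x) _ _ ltac:(lra) IH).
    pose proof (Rmult_le_pos _ _ (pos_INR n) (Rmult_le_pos _ _ (proj1 Hx) (proj1 Hx))). nra. }
  eapply Rle_trans; [apply Rmult_le_compat_l; [apply pow_le; lra | exact Hbern]|].
  rewrite <- Rpow_mult_distr. apply pow_le_one. nra.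
Qed.

Definition decay (B : R) (i : nat) : R := Rmin 1 (B / INR i ^ 2).

Lemma decay_nonneg B i : 0 <= B -> 0 <= decay B i.
Proof.
  intros HB. apply Rmin_glb; [lra|]. apply Rmult_le_pos; [lra|]. apply Rinv_nonneg, pow2_ge_0.
Qed.

Lemma decay_min B a b : 0 <= B -> decay B (Nat.min a b) <= decay B a + decay B b.
Proof.
  intros HB. pose proof (decay_nonneg B a HB). pose proof (decay_nonneg B b HB).
  destruct (Nat.min_spec a b) as [[_ ->]|[_ ->]]; lra.
Qed.

(* Terms below [I] are bounded by [1], terms beyond by [B (1/(i-1) - 1/i)]. *)
Lemma sum_decay_le_split B I K : 0 <= B -> (1 <= I)%nat ->
  sum_lt K (fun j => decay B (Datatypes.S j)) <=
  INR (Nat.min K I) + B * (/ INR I - / INR (Nat.max K I)).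
Proof.
  intros HB HI. induction K as [|K IH]; simpl sum_lt.
  - rewrite Nat.min_0_l, Nat.max_0_l. simpl. lra.
  - destruct (le_lt_dec I K) as [h|h].
    + rewrite Nat.min_r, Nat.max_l in IH by lia. rewrite Nat.min_r, Nat.max_l by lia.
      assert (HK : 1 <= INR K) by (apply (le_INR 1); lia).
      assert (decay B (Datatypes.S K) <= B / (INR K + 1) ^ 2) by (rewrite <- S_INR; apply Rmin_r).
      assert (B / (INR K + 1) ^ 2 <= B * (/ INR K - / (INR K + 1))).
      { replace (/ INR K - / (INR K + 1)) with (/ (INR K * (INR K + 1))) by (field; lra).
        apply Rmult_le_compat_l; auto. apply Rinv_le_contravar; nra. }
      rewrite S_INR. lra.
    + rewrite Nat.min_l, Nat.max_r in IH by lia. rewrite Nat.min_l, Nat.max_r by lia.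
      assert (decay B (Datatypes.S K) <= 1) by apply Rmin_l.
      rewrite S_INR. lra.
Qed.

Lemma sum_decay_le B I K : 0 <= B -> (1 <= I)%nat ->
  sum_lt K (fun j => decay B (Datatypes.S j)) <= INR I + B / INR I.
Proof.
  intros HB HI. eapply Rle_trans; [apply (sum_decay_le_split B I K HB HI)|].
  assert (INR (Nat.min K I) <= INR I) by (apply le_INR; lia).
  assert (0 <= B * / INR (Nat.max K I)) by (apply Rmult_le_pos, Rinv_nonneg, pos_INR; exact HB).
  unfold Rdiv. lra.
Qed.

Lemma sqrt_succ_sqrt_bounds m : (1 <= m)%nat ->
  sqrt (INR m) <= INR (Datatypes.S (Nat.sqrt m)) <= 2 * sqrt (INR m) /\ 1 <= sqrt (INR m).
Proof.
  intros Hm. pose proof (Nat.sqrt_spec' m) as [H1 H2].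
  apply le_INR in H1. apply lt_INR in H2. rewrite !mult_INR in H1, H2.
  set (s := Nat.sqrt m) in *. pose proof (pos_INR s).
  assert (Hm1 : 1 <= INR m) by (apply (le_INR 1); auto).
  assert (Hr1 : 1 <= sqrt (INR m)) by (rewrite <- sqrt_1; apply sqrt_le_1_alt; auto).
  assert (Hs1 : INR s <= sqrt (INR m))
    by (rewrite <- (sqrt_square (INR s)) by auto; now apply sqrt_le_1_alt).
  assert (Hs2 : sqrt (INR m) < INR (Datatypes.S s)).
  { rewrite <- (sqrt_square (INR (Datatypes.S s))) by apply pos_INR. apply sqrt_lt_1_alt. lra. }
  rewrite S_INR in *. repeat split; lra.
Qed.

Lemma ex_series_le_nonneg (a g : nat -> R) :
  (forall k, 0 <= a k <= g k) -> ex_series g -> ex_series a.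
Proof.
  intros H Hg. apply (ex_series_le a g); auto.
  intros k. change (norm (a k)) with (Rabs (a k)). rewrite Rabs_pos_eq; apply H.
Qed.

Lemma ex_series_bounded_sum_lt (f : nat -> R) B :
  (forall k, 0 <= f k) -> (forall N, sum_lt N f <= B) -> ex_series f.
Proof.
  intros H0 HB. destruct (ex_finite_lim_seq_incr (sum_n f) B) as [l Hl].
  - intros n. rewrite <- !sum_lt_sum_n.
    change (sum_lt (Datatypes.S (Datatypes.S n)) f) with (sum_lt (Datatypes.S n) f + f (Datatypes.S n)).
    pose proof (H0 (Datatypes.S n)). lra.
  - intros n. rewrite <- sum_lt_sum_n. apply HB.
  - now exists l.
Qed.

Lemma Series_nonneg f : (forall k, 0 <= f k) -> ex_series f -> 0 <= Series f.
Proof.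
  intros H He. rewrite <- (Rmult_0_l (Series f)), <- Series_scal_l.
  apply Series_le; auto. intros k. rewrite Rmult_0_l. split; [lra | apply H].
Qed.

Lemma Series_split f K : ex_series f -> Series f = sum_lt K f + Series (fun k => f (K + k)%nat).
Proof.
  intros He. destruct K as [|K].
  - simpl. rewrite Rplus_0_l. now apply Series_ext.
  - rewrite (Series_incr_n f (Datatypes.S K)) by (auto; lia).
    simpl pred. now rewrite sum_lt_sum_n, sum_n_Reals.
Qed.

Lemma sum_lt_le_Series f N : (forall k, 0 <= f k) -> ex_series f -> sum_lt N f <= Series f.
Proof.
  intros H He. rewrite (Series_split f N He).
  assert (0 <= Series (fun k => f (N + k)%nat)).
  { apply Series_nonneg; auto. now apply (ex_series_incr_n f N). }
  lra.
Qed.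

Lemma tannery (t : nat -> nat -> R) (a g : nat -> R) (N : nat -> nat) :
  ex_series g -> (forall k n, 0 <= t k n <= g k) ->
  (forall k, is_lim_seq (fun n => t k n) (a k)) ->
  (forall k n, (N n <= k)%nat -> t k n = 0) ->
  is_lim_seq (fun n => sum_lt (N n) (fun k => t k n)) (Series a).
Proof.
  intros Hg Ht Hl Hvan.
  assert (Ha : forall k, 0 <= a k <= g k).
  { intros k. split.
    - apply (is_lim_seq_le (fun _ => 0) (fun n => t k n) 0 (a k));
        [intros; apply Ht | apply is_lim_seq_const | apply Hl].
    - apply (is_lim_seq_le (fun n => t k n) (fun _ => g k) (a k) (g k));
        [intros; apply Ht | apply Hl | apply is_lim_seq_const]. }
  assert (Hae : ex_series a) by exact (ex_series_le_nonneg a g Ha Hg).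
  apply is_lim_seq_spec. intros eps.
  assert (He3 : 0 < eps / 3) by (destruct eps; simpl; lra).
  (* a tail of [g] smaller than [eps / 3] ... *)
  assert (Hgs : is_lim_seq (sum_n g) (Series g)) by exact (Series_correct g Hg).
  apply is_lim_seq_spec in Hgs.
  destruct (Hgs (mkposreal _ He3)) as [K0 HK0]. specialize (HK0 K0 (le_n _)). simpl in HK0.
  set (K := Datatypes.S K0). rewrite <- sum_lt_sum_n in HK0. fold K in HK0.
  set (tail_g := Series (fun k => g (K + k)%nat)).
  assert (Htail_g : tail_g < eps / 3).
  { rewrite (Series_split g K Hg) in HK0. apply Rabs_lt_between in HK0. unfold tail_g. lra. }
  assert (Htail_a : 0 <= Series (fun k => a (K + k)%nat) <= tail_g).
  { split; [apply Series_nonneg; [intros; apply Ha | now apply ex_series_incr_n]|].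
    apply Series_le; [intros; apply Ha | now apply ex_series_incr_n]. }
  (* ... and the first [K] terms converge *)
  pose proof (is_lim_seq_sum_lt K t a (fun k _ => Hl k)) as Hf. apply is_lim_seq_spec in Hf.
  destruct (Hf (mkposreal _ He3)) as [N1 HN1].
  exists N1. intros n Hn. specialize (HN1 n Hn). cbn [pos] in HN1.
  rewrite <- (sum_lt_vanishing (N n) (K + N n)) by (lia || (intros; apply Hvan; lia)).
  rewrite sum_lt_add, (Series_split a K Hae).
  assert (Hrest : 0 <= sum_lt (N n) (fun j => t (K + j)%nat n) <= tail_g).
  { split; [apply sum_lt_nonneg; intros; apply Ht|].
    apply Rle_trans with (sum_lt (N n) (fun j => g (K + j)%nat)); [apply sum_lt_le; intros; apply Ht|].
    apply sum_lt_le_Series; [intros; pose proof (Ht (K + k)%nat 0%nat); lra | now apply ex_series_incr_n]. }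
  apply Rabs_lt_between in HN1. apply Rabs_lt_between. lra.
Qed.

Lemma inv_three_halves_le_telescoping x : 1 <= x ->
  / ((x + 1) * sqrt (x + 1)) <= 2 / sqrt x - 2 / sqrt (x + 1).
Proof.
  intros Hx. set (a := sqrt x). set (b := sqrt (x + 1)).
  assert (Ha : 1 <= a) by (unfold a; rewrite <- sqrt_1; apply sqrt_le_1_alt; lra).
  assert (Hab : a <= b) by (unfold a, b; apply sqrt_le_1_alt; lra).
  assert (Haa : a * a = x) by (apply sqrt_sqrt; lra).
  assert (Hbb : b * b = x + 1) by (apply sqrt_sqrt; lra).
  rewrite <- Hbb.
  assert (Hp : 0 < a * (b * b * b)) by (repeat apply Rmult_lt_0_compat; lra).
  apply Rmult_le_reg_r with (a * (b * b * b)); [exact Hp|].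
  replace (/ (b * b * b) * (a * (b * b * b))) with a by (field; lra).
  replace ((2 / a - 2 / b) * (a * (b * b * b))) with (2 * b * b * b - 2 * a * b * b) by (field; lra).
  assert ((b - a) * (b + a) = 1) by nra.
  assert (0 <= (b - a) * (2 * b * b - a * a - a * b)) by (apply Rmult_le_pos; nra).
  nra.
Qed.

Lemma sum_inv_three_halves_le N : sum_lt N (fun k => / ((INR k + 1) * sqrt (INR k + 1))) <= 3.
Proof.
  assert (H : forall N, sum_lt (Datatypes.S N) (fun k => / ((INR k + 1) * sqrt (INR k + 1)))
                        <= 3 - 2 / sqrt (INR N + 1)).
  { induction N0 as [|N0 IH].
    - cbn [sum_lt]. replace (INR 0 + 1) with 1 by (simpl; ring). rewrite sqrt_1. lra.
    - change (sum_lt (Datatypes.S (Datatypes.S N0)) ?f)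
        with (sum_lt (Datatypes.S N0) f + f (Datatypes.S N0)).
      cbv beta. rewrite S_INR. pose proof (pos_INR N0).
      pose proof (inv_three_halves_le_telescoping (INR N0 + 1) ltac:(lra)). lra. }
  destruct N as [|N]; [simpl; lra|].
  assert (0 < 2 / sqrt (INR N + 1)).
  { apply Rdiv_lt_0_compat; [lra|]. apply sqrt_lt_R0. pose proof (pos_INR N). lra. }
  specialize (H N). lra.
Qed.

Lemma ex_series_inv_sqrt_Lambda_index : ex_series (fun k => / sqrt (INR (Lambda_index (k + 2)))).
Proof.
  apply ex_series_bounded_sum_lt with (sqrt 8 * 3).
  { intros k. apply Rinv_nonneg, sqrt_pos. }
  intros N. apply Rle_trans with (sum_lt N (fun k => sqrt 8 * / ((INR k + 1) * sqrt (INR k + 1)))).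
  - apply sum_lt_le. intros k _.
    pose proof (Lambda_index_cube_bound k) as HL. rewrite plus_INR in HL. simpl (INR 1) in HL.
    set (y := INR k + 1) in *. assert (Hy : 1 <= y) by (unfold y; pose proof (pos_INR k); lra).
    pose proof (Lambda_index_ge_1 (k + 2)). set (l := INR (Lambda_index (k + 2))) in *.
    assert (Hs : y * sqrt y <= sqrt 8 * sqrt l).
    { rewrite <- sqrt_mult, <- (sqrt_square y) at 1 by lra. rewrite <- sqrt_mult by nra.
      apply sqrt_le_1_alt. simpl in HL. nra. }
    assert (Hsy : 1 <= sqrt y) by (rewrite <- sqrt_1; apply sqrt_le_1_alt; lra).
    assert (Hsl : 0 < sqrt l) by (apply sqrt_lt_R0; lra).
    apply Rmult_le_reg_r with (sqrt l * (y * sqrt y)); [apply Rmult_lt_0_compat; nra|].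
    replace (/ sqrt l * (sqrt l * (y * sqrt y))) with (y * sqrt y) by (field; lra).
    replace (sqrt 8 * / (y * sqrt y) * (sqrt l * (y * sqrt y))) with (sqrt 8 * sqrt l) by (field; nra).
    exact Hs.
  - rewrite sum_lt_scal. apply Rmult_le_compat_l; [apply sqrt_pos | apply sum_inv_three_halves_le].
Qed.

(** * Fourier analysis of the lazy walk *)

Lemma Rabs_sin_IZR_combination_le (l : list Z) (c : Z -> Z) u :
  Rabs (sin (IZR (fold_right Z.add 0%Z (map (fun s => (c s * s)%Z) l)) * u)) <=
  sum_list l (fun s => Rabs (IZR (c s)) * Rabs (sin (u * IZR s))).
Proof.
  induction l as [|a l IH]; unfold sum_list in *; simpl.
  - rewrite Rmult_0_l, sin_0, Rabs_R0. lra.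
  - rewrite plus_IZR, Rmult_plus_distr_r. eapply Rle_trans; [apply Rabs_sin_plus_le|].
    apply Rplus_le_compat; [|exact IH].
    rewrite mult_IZR, Rmult_assoc, (Rmult_comm (IZR a)). apply Rabs_sin_IZR_mult_le.
Qed.

Definition lazy_symbol (S : list Z) (th : R) : R :=
  / 2 + / 2 * (/ INR (length S) * sum_list S (fun s => cos (th * IZR s))).

Section LazyWalk.

Variable S : list Z.
Hypothesis S_nodup : NoDup S.
Hypothesis S_sym : symmetric S.
Hypothesis S_gen : generates_Z S.

Let S_nonempty : S <> nil := generates_Z_nonempty S S_gen.

Lemma sum_list_sin_zero th : sum_list S (fun s => sin (th * IZR s)) = 0.
Proof.
  pose proof (sum_list_symmetric S (fun s => sin (th * IZR s)) S_nodup S_sym) as E. cbv beta in E.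
  rewrite (sum_list_ext S _ (fun s => (-1) * sin (th * IZR s) + 0 * 0)) in E.
  - rewrite sum_list_lin in E. lra.
  - intros s _. rewrite opp_IZR, <- Ropp_mult_distr_r, sin_neg. ring.
Qed.

Lemma lazy_step_cos th x :
  lazy_step S (fun y => cos (th * IZR y)) x = lazy_symbol S th * cos (th * IZR x).
Proof.
  rewrite lazy_step_eq. unfold lazy_symbol.
  rewrite (sum_list_ext S _ (fun s => cos (th * IZR x) * cos (th * IZR s) +
                                      (- sin (th * IZR x)) * sin (th * IZR s))).
  - rewrite sum_list_lin, sum_list_sin_zero. ring.
  - intros s _. rewrite plus_IZR, Rmult_plus_distr_l, cos_plus. ring.
Qed.

Lemma walk_cos n th x0 :
  walk_expect S n (fun y => cos (th * IZR y)) x0 = lazy_symbol S th ^ n * cos (th * IZR x0).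
Proof.
  induction n as [|n IH]; cbn [walk_expect pow]; [ring|].
  rewrite (walk_ext S n _ (fun y => lazy_symbol S th * cos (th * IZR y))) by apply lazy_step_cos.
  rewrite walk_scal, IH. ring.
Qed.

Lemma walk_prob_in_kZ n m : (1 <= m)%nat ->
  walk_prob S n (in_kZ m) = / INR m * sum_lt m (fun j => lazy_symbol S (root_angle j m) ^ n).
Proof.
  intros Hm. assert (Hm0 : INR m <> 0) by (apply not_0_INR; lia).
  unfold walk_prob.
  rewrite (walk_ext S n _ (fun x => / INR m * sum_lt m (fun j => cos (root_angle j m * IZR x)))).
  - rewrite walk_scal, (walk_sum_lt S S_nonempty). f_equal. apply sum_lt_ext. intros j _.
    rewrite walk_cos, Rmult_0_r, cos_0. ring.
  - intros x. rewrite sum_cos_root_angles by exact Hm. field. exact Hm0.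
Qed.

Lemma walk_prob_nonzero_Lambda n k :
  walk_prob S n (fun x => x <> 0%Z /\ Lambda (k + 2) x) =
  walk_prob S n (in_kZ (Lambda_index (k + 2))) - walk_prob S n (fun x => x = 0%Z).
Proof.
  rewrite <- walk_prob_diff by (intros x ->; apply Z.divide_0_r).
  apply walk_prob_iff. intros x. rewrite Lambda_iff_in_kZ. tauto.
Qed.

Lemma walk_prob_nonzero_Lambda_vanishing n k : (Z.to_nat (Z.of_nat n * jump_bound S) <= k)%nat ->
  walk_prob S n (fun x => x <> 0%Z /\ Lambda (k + 2) x) = 0.
Proof.
  intros Hk. apply (walk_prob_out_of_range S S_nonempty). intros x [Hx HL].
  assert (Hd : in_kZ (k + 2) x) by (apply HL; lia).
  apply Z.divide_abs_r, Z.divide_pos_le in Hd; lia.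
Qed.

Lemma lazy_symbol_bounds th : 0 <= lazy_symbol S th <= 1.
Proof.
  pose proof (length_pos S S_nonempty). unfold lazy_symbol.
  pose proof (sum_list_le S _ (fun _ => 1) (fun s _ => proj2 (COS_bound (th * IZR s)))).
  pose proof (sum_list_le S (fun _ => -1) _ (fun s _ => proj1 (COS_bound (th * IZR s)))).
  rewrite sum_list_const in *.
  assert (/ INR (length S) * INR (length S) = 1) by (field; lra).
  assert (0 < / INR (length S)) by (apply Rinv_0_lt_compat; lra).
  split; nra.
Qed.

Lemma lazy_symbol_0 : lazy_symbol S 0 = 1.
Proof.
  pose proof (length_pos S S_nonempty). unfold lazy_symbol.
  rewrite (sum_list_ext S _ (fun _ => 1)), sum_list_const.
  - field. lra.
  - intros s _. rewrite Rmult_0_l. apply cos_0.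
Qed.

Lemma one_minus_lazy_symbol u :
  1 - lazy_symbol S (2 * u) = / INR (length S) * sum_list S (fun s => sin (u * IZR s) ^ 2).
Proof.
  pose proof (length_pos S S_nonempty). unfold lazy_symbol.
  rewrite (sum_list_ext S _ (fun s => 1 * 1 + (-2) * sin (u * IZR s) ^ 2)).
  - rewrite sum_list_lin, sum_list_const. field. lra.
  - intros s _. rewrite Rmult_assoc, cos_2a_sin. ring.
Qed.

(* Since [S] generates [Z], [1 = sum c_s s], which bounds [|sin u|] by the [|sin (u s)|]. *)
Lemma lazy_symbol_gap : exists C, 0 < C /\ forall u, sin u ^ 2 <= C * (1 - lazy_symbol S (2 * u)).
Proof.
  destruct (S_gen 1%Z) as [c Hc].
  set (A := sum_list S (fun s => Rabs (IZR (c s)))).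
  assert (HA : 0 <= A) by (apply sum_list_nonneg; intros; apply Rabs_pos).
  pose proof (length_pos S S_nonempty) as Hlen.
  exists (A ^ 2 * INR (length S) + 1). split; [pose proof (pow2_ge_0 A); nra|].
  intros u. rewrite one_minus_lazy_symbol.
  set (T := sum_list S (fun s => sin (u * IZR s) ^ 2)).
  assert (HT : 0 <= T) by (apply sum_list_nonneg; intros; apply pow2_ge_0).
  assert (Hsin : Rabs (sin u) <= A * sqrt T).
  { pose proof (Rabs_sin_IZR_combination_le S c u) as B. rewrite <- Hc, Rmult_1_l in B.
    eapply Rle_trans; [exact B|]. unfold A. rewrite Rmult_comm.
    replace (sqrt T * _) with (sum_list S (fun s => sqrt T * Rabs (IZR (c s)) + 0 * 0))
      by (rewrite sum_list_lin; ring).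
    apply sum_list_le. intros s Hs. rewrite Rmult_0_l, Rplus_0_r, (Rmult_comm (sqrt T)).
    apply Rmult_le_compat_l; [apply Rabs_pos|].
    rewrite <- sqrt_Rsqr_abs. apply sqrt_le_1_alt.
    rewrite Rsqr_pow2. apply (sum_list_term_le S (fun s => sin (u * IZR s) ^ 2)); auto.
    intros; apply pow2_ge_0. }
  assert (Hsq : sin u ^ 2 <= A ^ 2 * T).
  { rewrite <- (sqrt_sqrt T HT), <- pow2_abs.
    replace (A ^ 2 * (sqrt T * sqrt T)) with ((A * sqrt T) ^ 2) by ring.
    apply pow_incr. split; [apply Rabs_pos | exact Hsin]. }
  assert (0 <= / INR (length S) * T) by (apply Rmult_le_pos; [apply Rinv_nonneg|]; lra).
  replace ((A ^ 2 * INR (length S) + 1) * (/ INR (length S) * T))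
    with (A ^ 2 * T + / INR (length S) * T) by (field; lra).
  lra.
Qed.

Section WithGap.

Variable C : R.
Hypothesis C_pos : 0 < C.
Hypothesis gap : forall u, sin u ^ 2 <= C * (1 - lazy_symbol S (2 * u)).

Lemma lazy_symbol_root_angle_le m j : (1 <= j)%nat -> (j < m)%nat ->
  lazy_symbol S (root_angle j m) <= 1 - (INR (Nat.min j (m - j)) / INR m) ^ 2 / C.
Proof.
  intros Hj Hjm. assert (Hm : 0 < INR m) by (apply lt_0_INR; lia).
  replace (root_angle j m) with (2 * (PI * INR j / INR m)) by (unfold root_angle; field; lra).
  pose proof (sin_root_angle_lower m j Hj Hjm) as Hs.
  assert (0 <= INR (Nat.min j (m - j)) / INR m) by (apply Rdiv_le_0_compat; [apply pos_INR | lra]).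
  pose proof (pow_incr _ _ 2 (conj H Hs)) as Hs2. pose proof (gap (PI * INR j / INR m)).
  apply Rmult_le_reg_r with C; [exact C_pos|].
  replace ((1 - (INR (Nat.min j (m - j)) / INR m) ^ 2 / C) * C)
    with (C - (INR (Nat.min j (m - j)) / INR m) ^ 2) by (field; lra).
  lra.
Qed.

Lemma lazy_symbol_root_angle_pow_le n m j : (1 <= n)%nat -> (1 <= j)%nat -> (j < m)%nat ->
  lazy_symbol S (root_angle j m) ^ n <= decay (C * INR m ^ 2 / INR n) (Nat.min j (m - j)).
Proof.
  intros Hn Hj Hjm. set (i := Nat.min j (m - j)).
  assert (Hm : 0 < INR m) by (apply lt_0_INR; lia).
  assert (Hn1 : 1 <= INR n) by (apply (le_INR 1); lia).
  assert (Hi : 1 <= INR i) by (apply (le_INR 1); unfold i; lia).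
  pose proof (lazy_symbol_bounds (root_angle j m)) as [P0 P1].
  pose proof (lazy_symbol_root_angle_le m j Hj Hjm) as Hle. fold i in Hle.
  set (x := (INR i / INR m) ^ 2 / C) in *.
  assert (Hx : 0 <= x <= 1).
  { split; [|lra]. apply Rmult_le_pos; [apply pow2_ge_0 | apply Rinv_nonneg; lra]. }
  eapply Rle_trans; [apply pow_incr; split; [exact P0 | exact Hle]|].
  apply Rmin_glb; [apply pow_le_one; lra|].
  pose proof (pow_one_minus_mul_le x n Hx) as Hb.
  assert (HP : 0 <= (1 - x) ^ n) by (apply pow_le; lra).
  replace (C * INR m ^ 2 / INR n / INR i ^ 2) with (/ (INR n * x)) by (unfold x; field; repeat split; nra).
  assert (Hnx : 0 < INR n * x).
  { apply Rmult_lt_0_compat; [lra|]. unfold x.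
    apply Rdiv_lt_0_compat; [apply pow_lt, Rdiv_lt_0_compat|]; lra. }
  apply Rmult_le_reg_r with (INR n * x); [exact Hnx|]. rewrite Rinv_l by lra. nra.
Qed.

(* Pair the frequencies [j] and [m - j] and compare with [decay]. *)
Lemma sum_lazy_symbol_pow_le n m I : (1 <= n)%nat -> (1 <= m)%nat -> (1 <= I)%nat ->
  sum_lt m (fun j => lazy_symbol S (root_angle j m) ^ n) <=
  1 + 2 * (INR I + (C * INR m ^ 2 / INR n) / INR I).
Proof.
  intros Hn Hm HI. set (B := C * INR m ^ 2 / INR n).
  assert (HB : 0 <= B)
    by (apply Rmult_le_pos; [pose proof (pow2_ge_0 (INR m)); nra | apply Rinv_nonneg, pos_INR]).
  destruct m as [|m]; [lia|]. rewrite sum_lt_succ_l.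
  assert (H0 : lazy_symbol S (root_angle 0 (Datatypes.S m)) ^ n <= 1)
    by (apply pow_le_one, lazy_symbol_bounds).
  assert (H1 : sum_lt m (fun j => lazy_symbol S (root_angle (Datatypes.S j) (Datatypes.S m)) ^ n) <=
               sum_lt m (fun j => decay B (Datatypes.S j)) +
               sum_lt m (fun j => decay B (Datatypes.S (m - 1 - j)))).
  { rewrite <- sum_lt_plus. apply sum_lt_le. intros k Hk.
    eapply Rle_trans; [apply lazy_symbol_root_angle_pow_le; lia|]. fold B.
    eapply Rle_trans; [apply decay_min; exact HB|].
    replace (Datatypes.S m - Datatypes.S k)%nat with (Datatypes.S (m - 1 - k)) by lia. lra. }
  rewrite (sum_lt_rev m (fun j => decay B (Datatypes.S j))) in H1.
  pose proof (sum_decay_le B I m HB HI). lra.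
Qed.

(* The choice [I ~ sqrt m] balances the two terms of [sum_lazy_symbol_pow_le]. *)
Lemma walk_prob_in_kZ_le n m : (1 <= m)%nat -> INR m <= INR n * IZR (jump_bound S) ->
  walk_prob S n (in_kZ m) <= (5 + 2 * C * IZR (jump_bound S)) / sqrt (INR m).
Proof.
  intros Hm Hmn.
  pose proof (IZR_le _ _ (jump_bound_nonneg S)) as HM. set (M := IZR (jump_bound S)) in *.
  assert (Hm1 : 1 <= INR m) by (apply (le_INR 1); auto).
  assert (Hn : (1 <= n)%nat) by (destruct n; [simpl in Hmn; lra | lia]).
  assert (Hn1 : 1 <= INR n) by (apply (le_INR 1); auto).
  rewrite walk_prob_in_kZ by exact Hm.
  set (I := Datatypes.S (Nat.sqrt m)).
  pose proof (sum_lazy_symbol_pow_le n m I Hn Hm ltac:(unfold I; lia)) as Hb.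
  destruct (sqrt_succ_sqrt_bounds m Hm) as [[HI1 HI2] Hr1]. fold I in HI1, HI2.
  set (r := sqrt (INR m)) in *.
  assert (Hrr : r * r = INR m) by (apply sqrt_sqrt; lra).
  set (B := C * INR m ^ 2 / INR n) in *.
  assert (HB1 : B <= C * INR m * M).
  { unfold B, Rdiv. replace (C * INR m ^ 2 * / INR n) with ((C * INR m) * (INR m / INR n)) by (field; lra).
    apply Rmult_le_compat_l; [nra|].
    apply Rmult_le_reg_r with (INR n); [lra|]. unfold Rdiv. rewrite Rmult_assoc, Rinv_l; lra. }
  assert (HBI : B / INR I <= C * M * r).
  { apply Rmult_le_reg_r with (INR I); [lra|]. unfold Rdiv. rewrite Rmult_assoc, Rinv_l by lra.
    rewrite <- Hrr in HB1.
    assert (0 <= C * M * r) by (repeat apply Rmult_le_pos; lra).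
    pose proof (Rmult_le_compat_l _ _ _ H HI1). lra. }
  assert (Hsum : 1 + 2 * (INR I + B / INR I) <= (5 + 2 * C * M) * r) by nra.
  apply Rmult_le_reg_l with (INR m); [lra|].
  rewrite <- Rmult_assoc, Rinv_r, Rmult_1_l by lra.
  rewrite <- Hrr. unfold Rdiv.
  replace (r * r * ((5 + 2 * C * M) * / r)) with ((5 + 2 * C * M) * r) by (field; lra).
  lra.
Qed.

Lemma walk_prob_nonzero_Lambda_le n k :
  walk_prob S n (fun x => x <> 0%Z /\ Lambda (k + 2) x) <=
  (5 + 2 * C * IZR (jump_bound S)) / sqrt (INR (Lambda_index (k + 2))).
Proof.
  set (L := Lambda_index (k + 2)). pose proof (Lambda_index_spec (k + 2)) as [HL1 _]. fold L in HL1.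
  destruct (Rle_dec (INR L) (INR n * IZR (jump_bound S))) as [Hnear|Hfar].
  - rewrite walk_prob_nonzero_Lambda.
    pose proof (walk_prob_nonneg S S_nonempty n (fun x => x = 0%Z)).
    pose proof (walk_prob_in_kZ_le n L HL1 Hnear). fold L. lra.
  - rewrite (walk_prob_out_of_range S S_nonempty n).
    + pose proof (IZR_le _ _ (jump_bound_nonneg S)).
      apply Rmult_le_pos; [nra | apply Rinv_nonneg, sqrt_pos].
    + intros x [Hx HL]. apply Lambda_iff_in_kZ in HL. fold L in HL.
      apply Z.divide_abs_r, Z.divide_pos_le in HL; [|lia].
      apply Z.lt_nge. intros Hle. apply Hfar.
      rewrite !INR_IZR_INZ, <- mult_IZR. apply IZR_le. lia.
Qed.

End WithGap.

Lemma walk_prob_in_kZ_lim m : (1 <= m)%nat ->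
  is_lim_seq (fun n => walk_prob S n (in_kZ m)) (/ INR m).
Proof.
  intros Hm. destruct lazy_symbol_gap as [C [HC Hgap]].
  apply is_lim_seq_ext with
    (fun n => / INR m * (1 + sum_lt (m - 1) (fun k => lazy_symbol S (root_angle (Datatypes.S k) m) ^ n))).
  { intros n. rewrite walk_prob_in_kZ by exact Hm. f_equal. destruct m as [|m]; [lia|].
    rewrite sum_lt_succ_l.
    replace (root_angle 0 (Datatypes.S m)) with 0 by (unfold root_angle; rewrite INR_0; unfold Rdiv; ring).
    rewrite lazy_symbol_0, pow1. now replace (Datatypes.S m - 1)%nat with m by lia. }
  assert (Hsum : is_lim_seq
    (fun n => sum_lt (m - 1) (fun k => lazy_symbol S (root_angle (Datatypes.S k) m) ^ n)) 0).
  { replace 0 with (sum_lt (m - 1) (fun _ => 0)) by (rewrite sum_lt_const; ring).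
    apply is_lim_seq_sum_lt. intros k Hk. apply is_lim_seq_geom.
    pose proof (lazy_symbol_bounds (root_angle (Datatypes.S k) m)).
    pose proof (lazy_symbol_root_angle_le C HC Hgap m (Datatypes.S k) ltac:(lia) ltac:(lia)).
    assert (0 < INR (Nat.min (Datatypes.S k) (m - Datatypes.S k)) / INR m)
      by (apply Rdiv_lt_0_compat; apply lt_0_INR; lia).
    assert (0 < (INR (Nat.min (Datatypes.S k) (m - Datatypes.S k)) / INR m) ^ 2 / C)
      by (apply Rdiv_lt_0_compat; [apply pow_lt|]; lra).
    rewrite Rabs_pos_eq; lra. }
  pose proof (is_lim_seq_scal_l _ (/ INR m) _ (is_lim_seq_plus' _ _ 1 0 (is_lim_seq_const 1) Hsum)) as Hlim.
  simpl in Hlim. now rewrite Rplus_0_r, Rmult_1_r in Hlim.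
Qed.

(* [P(X_n = 0) <= P(X_n in mZ) -> 1/m] for every [m]. *)
Lemma walk_prob_zero_lim : is_lim_seq (fun n => walk_prob S n (fun x => x = 0%Z)) 0.
Proof.
  apply is_lim_seq_spec. intros eps.
  destruct (archimed_cor1 (eps / 2)) as [m [Hm1 Hm2]]; [destruct eps; simpl; lra|].
  pose proof (walk_prob_in_kZ_lim m Hm2) as Hq. apply is_lim_seq_spec in Hq.
  destruct (Hq (mkposreal (eps / 2) ltac:(destruct eps; simpl; lra))) as [N HN].
  exists N. intros n Hn. specialize (HN n Hn). simpl in HN.
  pose proof (walk_prob_nonneg S S_nonempty n (fun x => x = 0%Z)).
  assert (Hsub : forall x, x = 0%Z -> in_kZ m x) by (intros x ->; apply Z.divide_0_r).
  pose proof (walk_prob_mono S n _ _ Hsub).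
  rewrite Rminus_0_r, Rabs_pos_eq by assumption.
  apply Rabs_lt_between in HN. lra.
Qed.

Lemma walk_expect_DZ n :
  walk_expect S n (fun x => INR (DZ x)) 0%Z =
  2 * (1 - walk_prob S n (fun x => x = 0%Z)) +
  sum_lt (Z.to_nat (Z.of_nat n * jump_bound S))
    (fun k => walk_prob S n (fun x => x <> 0%Z /\ Lambda (k + 2) x)).
Proof.
  set (K := Z.to_nat (Z.of_nat n * jump_bound S)).
  rewrite (walk_local S n _
    (fun x => 2 * indic (x <> 0%Z) + sum_lt K (fun k => indic (x <> 0%Z /\ Lambda (k + 2) x)))).
  - rewrite walk_plus, walk_scal, (walk_sum_lt S S_nonempty). do 2 f_equal.
    rewrite <- (walk_const S S_nonempty n 1 0%Z). unfold walk_prob. rewrite <- walk_minus.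
    apply walk_ext. intros x. destruct (Z.eq_dec x 0) as [Hx|Hx].
    + rewrite indic_false, indic_true by tauto. ring.
    + rewrite indic_true, (indic_false (x = 0%Z)) by tauto. ring.
  - intros x Hx. apply DZ_as_sum. pose proof (jump_bound_nonneg S). unfold K. lia.
Qed.

Lemma walk_expect_DZ_lim :
  is_lim_seq (fun n => walk_expect S n (fun x => INR (DZ x)) 0%Z)
             (2 + Series (fun k => / INR (Lambda_index (k + 2)))).
Proof.
  destruct lazy_symbol_gap as [C [HC Hgap]].
  set (p n := walk_prob S n (fun x => x = 0%Z)).
  set (t k n := walk_prob S n (fun x => x <> 0%Z /\ Lambda (k + 2) x)).
  apply (is_lim_seq_ext
    (fun n => 2 * (1 - p n) + sum_lt (Z.to_nat (Z.of_nat n * jump_bound S)) (fun k => t k n)));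
    [intros n; symmetry; apply walk_expect_DZ|].
  replace (2 + _) with (2 * (1 - 0) + Series (fun k => / INR (Lambda_index (k + 2)))) by ring.
  apply is_lim_seq_plus'.
  - apply (is_lim_seq_scal_l _ 2 (1 - 0)), is_lim_seq_minus';
      [apply is_lim_seq_const | apply walk_prob_zero_lim].
  - apply tannery with
      (g := fun k => (5 + 2 * C * IZR (jump_bound S)) * / sqrt (INR (Lambda_index (k + 2)))).
    + exact (ex_series_scal_l _ _ ex_series_inv_sqrt_Lambda_index).
    + intros k n. split; [apply walk_prob_nonneg, S_nonempty | apply walk_prob_nonzero_Lambda_le; auto].
    + intros k. replace (/ INR (Lambda_index (k + 2))) with (/ INR (Lambda_index (k + 2)) - 0) by ring.
      apply (is_lim_seq_ext (fun n => walk_prob S n (in_kZ (Lambda_index (k + 2))) - p n));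
        [intros n; symmetry; apply walk_prob_nonzero_Lambda|].
      apply is_lim_seq_minus'; [apply walk_prob_in_kZ_lim, Lambda_index_spec | apply walk_prob_zero_lim].
    + intros k n. apply walk_prob_nonzero_Lambda_vanishing.
Qed.

End LazyWalk.

Lemma ex_series_inv_Lambda_index : ex_series (fun k => / INR (Lambda_index (k + 2))).
Proof.
  apply (ex_series_le_nonneg _ _) with (2 := ex_series_inv_sqrt_Lambda_index). intros k.
  pose proof (Lambda_index_ge_1 (k + 2)) as HL. set (l := INR (Lambda_index (k + 2))) in *.
  assert (Hs : 1 <= sqrt l) by (rewrite <- sqrt_1; apply sqrt_le_1_alt; lra).
  assert (Hsl : sqrt l <= l) by (rewrite <- (sqrt_square l) at 2 by lra; apply sqrt_le_1_alt; nra).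
  split; [apply Rinv_nonneg; lra | apply Rinv_le_contravar; lra].
Qed.

Theorem corollary4p5 (S : list Z) (HS_nodup : NoDup S)
  (HS_sym : symmetric S) (HS_gen : generates_Z S) :
  let a := fun k : nat => / INR (indexZ (Lambda (k + 2)%nat)) in
  ex_series a /\
  is_lim_seq (fun n : nat => walk_expect S n (fun x => INR (DZ x)) 0%Z)
             (2 + Series a).
Proof.
  split.
  - exact ex_series_inv_Lambda_index.
  - exact (walk_expect_DZ_lim S HS_nodup HS_sym HS_gen).
Qed.
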